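(* Let $t$ be a normal $\lambda$-term and $v$ a closed $\lambda$-term, let $\alpha$ be a variable, $x_1,\dots,x_r$ variables, and for each $i$ let $y_{i1},\dots,y_{in_i}$ be variables distinct from $\alpha$. If $t[\lambda y_{11}\dots\lambda y_{1n_1}\alpha/x_1,\dots,\lambda y_{r1}\dots\lambda y_{rn_r}\alpha/x_r]\rightarrow_\beta v$ (simultaneous substitution), then $x_i\notin Fv(t)$ for all $1\le i\le r$.
   Context: $\lambda$-terms are those of the untyped $\lambda$-calculus; $Fv(t)$ is the set of free variables of $t$; a term is closed if it has no free variable; substitution is capture-avoiding; $\rightarrow_\beta$ denotes $\beta$-reduction in zero or more steps; a term is normal if it contains no $\beta$-redex. *)

From mathcomp Require Import all_boot.
From Stdlib Require Import Relations.

Set Implicit Arguments.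
Unset Strict Implicit.
Unset Printing Implicit Defensive.

Inductive term : Type :=
| var : nat -> term
| app : term -> term -> term
| lam : term -> term.

Definition up_ren (xi : nat -> nat) (n : nat) : nat :=
  match n with 0 => 0 | S k => S (xi k) end.

Fixpoint ren (xi : nat -> nat) (t : term) : term :=
  match t with
  | var n => var (xi n)
  | app t1 t2 => app (ren xi t1) (ren xi t2)
  | lam b => lam (ren (up_ren xi) b)
  end.

Definition up (sigma : nat -> term) (n : nat) : term :=
  match n with 0 => var 0 | S k => ren S (sigma k) end.

Fixpoint subst (sigma : nat -> term) (t : term) : term :=
  match t with
  | var n => sigma n
  | app t1 t2 => app (subst sigma t1) (subst sigma t2)
  | lam b => lam (subst (up sigma) b)
  end.

Definition beta_subst (b a : term) : term :=
  subst (fun n => match n with 0 => a | S k => var k end) b.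

Inductive step : term -> term -> Prop :=
| step_beta b a : step (app (lam b) a) (beta_subst b a)
| step_appL t t' u : step t t' -> step (app t u) (app t' u)
| step_appR t u u' : step u u' -> step (app t u) (app t u')
| step_lam t t' : step t t' -> step (lam t) (lam t').

Definition red : term -> term -> Prop := clos_refl_trans term step.

Fixpoint free (n : nat) (t : term) : Prop :=
  match t with
  | var m => m = n
  | app t1 t2 => free n t1 \/ free n t2
  | lam b => free n.+1 b
  end.

Definition closed_term (t : term) : Prop := forall n, ~ free n t.

Fixpoint normal (t : term) : Prop :=
  match t with
  | var _ => True
  | app (lam _) _ => False
  | app t1 t2 => normal t1 /\ normal t2
  | lam b => normal b
  end.

Fixpoint lams (k : nat) (b : term) : term :=
  match k with 0 => b | S k' => lam (lams k' b) end.

(* the term  \y_1 ... \y_k . alpha  with alpha free (y_j distinct from alpha):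
   under k binders the free variable alpha has index alpha + k *)
Definition lams_var (k alpha : nat) : term := lams k (var (alpha + k)).

(* the simultaneous substitution [lams_var n_i alpha / x_i]_{i}, where
   xs = [x_1;...;x_r], ns = [n_1;...;n_r] (first occurrence wins if some
   x_i coincide) *)
Definition sub_sigma (alpha : nat) (xs ns : seq nat) (z : nat) : term :=
  if z \in xs then lams_var (nth 0 ns (index z xs)) alpha else var z.

(* Substituting terms of the form \y1...yn.alpha for variables of a normal
   term creates redexes only of the form (\y1...yn.alpha) a1 ... am, and
   contracting them merely discards arguments, leaving alpha in head
   position.  Hence if t has a free variable, so does every reduct of the
   substituted term, which therefore never reaches a closed term.  The
   predicate [keeps_free k] describes such reducts (with a free variable of
   index at least k, to go under binders); it is stable under reduction. *)

From mathcomp Require Import all_boot.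

Set Implicit Arguments.
Unset Strict Implicit.

Lemma lams_varS p h : lams_var p.+1 h = lam (lams_var p h.+1).
Proof. by rewrite /lams_var /= addSnnS. Qed.

Lemma ren_lams_var xi p h : ren xi (lams_var p h) = lams_var p (xi h).
Proof.
elim: p xi h => [|p IH] xi h; first by rewrite /lams_var !addn0.
by rewrite !lams_varS /= IH.
Qed.

Lemma subst_lams_var sigma p h m :
  sigma h = var m -> subst sigma (lams_var p h) = lams_var p m.
Proof.
elim: p sigma h m => [|p IH] sigma h m E; first by rewrite /lams_var !addn0 /= E.
by rewrite !lams_varS /= (IH _ h.+1 m.+1) //= E.
Qed.

Lemma free_lams_var p h : free h (lams_var p h).
Proof. by elim: p h => [|p IH] h; rewrite ?lams_varS //= /lams_var addn0. Qed.

Lemma step_lamE b u : step (lam b) u -> exists2 b', step b b' & u = lam b'.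
Proof. by move=> H; inversion H; exists t'. Qed.

Lemma lams_var_irreducible p h u : ~ step (lams_var p h) u.
Proof.
elim: p h u => [|p IH] h u; first by rewrite /lams_var addn0 => H; inversion H.
by rewrite lams_varS => /step_lamE [u' /IH].
Qed.

Lemma step_appE s a u : step (app s a) u ->
  [\/ exists2 b, s = lam b & u = beta_subst b a,
      exists2 s', step s s' & u = app s' a
    | exists2 a', step a a' & u = app s a'].
Proof.
move=> H; inversion H; subst.
- by apply: Or31; exists b.
- by apply: Or32; exists t'.
- by apply: Or33; exists u'.
Qed.

Fixpoint neutral (t : term) : Prop :=
  match t with
  | var _ => True
  | app s _ => neutral s
  | lam _ => False
  end.

Lemma neutral_step n n' : neutral n -> step n n' -> neutral n'.
Proof.
elim: n n' => [j|s IHs a _|b _] n' //= Hn H; first by inversion H.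
by case: (step_appE H) => [[b Eb _]|[s' Hs ->]|[a' _ ->]] //=;
  [rewrite Eb in Hn | apply: IHs].
Qed.

Lemma normal_neutral t : normal t -> (forall b, t <> lam b) -> neutral t.
Proof.
elim: t => [j|s IHs a _|b _] //=; last by move=> _ /(_ b).
by case: s IHs => // s1 s2 IHs [Hs _] _; apply: IHs.
Qed.

Lemma normal_appE s a : normal (app s a) -> [/\ neutral s, normal s & normal a].
Proof.
case: s => [j|s1 s2|b] //= [Hs Ha]; split => //.
by apply: (@normal_neutral (app s1 s2)).
Qed.

Inductive spine_free (k : nat) : term -> Prop :=
| spine_head p h : k <= h -> spine_free k (lams_var p h)
| spine_app s a : spine_free k s -> spine_free k (app s a).

Lemma spine_free_beta k b a : spine_free k (lam b) -> spine_free k (beta_subst b a).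
Proof.
move=> H; inversion H as [p h Hkh E|]; move: E.
case: p => [|p]; first by rewrite /lams_var addn0.
rewrite lams_varS => -[<-]; rewrite /beta_subst (@subst_lams_var _ _ _ h) //.
exact: spine_head.
Qed.

Lemma spine_free_step k s u : spine_free k s -> step s u -> spine_free k u.
Proof.
move=> Hs; elim: Hs u => [p h _|s0 a Hs0 IH] u H.
- by case: (lams_var_irreducible H).
- case: (step_appE H) => [[b Eb ->]|[s' Hs' ->]|[a' _ ->]].
  + by rewrite Eb in Hs0; apply: spine_free_beta.
  + by apply/spine_app/IH.
  + exact: spine_app.
Qed.

Lemma spine_free_free k s : spine_free k s -> exists2 n, k <= n & free n s.
Proof.
elim=> [p h Hkh|s0 a _ [n Hn Hf]]; first by exists h => //; apply: free_lams_var.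
by exists n => //; left.
Qed.

Inductive keeps_free : nat -> term -> Prop :=
| keeps_lam k b : keeps_free k.+1 b -> keeps_free k (lam b)
| keeps_spine k s : spine_free k s -> keeps_free k s
| keeps_fun k n a : neutral n -> keeps_free k n -> keeps_free k (app n a)
| keeps_arg k n a : neutral n -> keeps_free k a -> keeps_free k (app n a).

Lemma keeps_free_step k s u : keeps_free k s -> step s u -> keeps_free k u.
Proof.
move=> Hk; elim: Hk u => [k0 b _ IH|k0 s0 Hs|k0 n a Hn Hkn IH|k0 n a Hn Hka IH] u H.
- by case: (step_lamE H) => b' Hb ->; apply/keeps_lam/IH.
- by apply/keeps_spine/(spine_free_step Hs).
- case: (step_appE H) => [[b En _]|[n' Hn' ->]|[a' _ ->]]; first by rewrite En in Hn.
  + by apply: keeps_fun; [apply: neutral_step Hn'|apply: IH].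
  + exact: keeps_fun.
- case: (step_appE H) => [[b En _]|[n' Hn' ->]|[a' Ha' ->]]; first by rewrite En in Hn.
  + exact: keeps_arg (neutral_step Hn Hn') Hka.
  + by apply: keeps_arg => //; apply: IH.
Qed.

Lemma keeps_free_red k s u : red s u -> keeps_free k s -> keeps_free k u.
Proof.
elim=> [s1 s2 H|//|s1 s2 s3 _ IH1 _ IH2] Hk; last by apply/IH2/IH1.
exact: keeps_free_step Hk H.
Qed.

Lemma keeps_free_free k s : keeps_free k s -> exists2 n, k <= n & free n s.
Proof.
elim=> [k0 b _ [[|n] Hn Hf]|k0 s0 /spine_free_free //|
        k0 n a _ _ [m Hm Hf]|k0 n a _ _ [m Hm Hf]] //.
- by exists n.
- by exists m => //; left.
- by exists m => //; right.
Qed.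

(* The form taken by [sub_sigma] once pushed under [d] binders. *)
Definition lams_var_subst (d : nat) (sigma : nat -> term) : Prop :=
  forall y, (y < d -> sigma y = var y) /\
            (d <= y -> exists p h, d <= h /\ sigma y = lams_var p h).

Lemma lams_var_subst_up d sigma :
  lams_var_subst d sigma -> lams_var_subst d.+1 (up sigma).
Proof.
move=> Hsig [|y]; split => // Hy /=.
- by rewrite (proj1 (Hsig y)).
- have [p [h [Hdh ->]]] := proj2 (Hsig y) Hy.
  by exists p, h.+1; rewrite ren_lams_var.
Qed.

Lemma sub_sigma_lams_var_subst alpha xs ns :
  lams_var_subst 0 (sub_sigma alpha xs ns).
Proof.
move=> y; split => // _; rewrite /sub_sigma.
case: (y \in xs); first by exists (nth 0 ns (index y xs)), alpha.
by exists 0, y; rewrite /lams_var addn0.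
Qed.

Lemma subst_neutral d sigma t : lams_var_subst d sigma -> neutral t ->
  neutral (subst sigma t) \/ spine_free d (subst sigma t).
Proof.
move=> Hsig; elim: t => [j|s IHs a _|b _] //= Hn.
- case: (ltnP j d) => Hj; first by left; rewrite (proj1 (Hsig j)).
  by have [p [h [Hdh ->]]] := proj2 (Hsig j) Hj; right; apply: spine_head.
- by case: (IHs Hn) => H; [left|right; apply: spine_app].
Qed.

Lemma keeps_free_subst t : normal t -> forall d sigma x,
  lams_var_subst d sigma -> d <= x -> free x t -> keeps_free d (subst sigma t).
Proof.
elim: t => [j|s IHs a IHa|b IHb] /= Ht d sigma x Hsig Hdx Hx.
- rewrite Hx; have [p [h [Hdh ->]]] := proj2 (Hsig x) Hdx.
  exact/keeps_spine/spine_head.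
- have [Hns Hs Ha] := normal_appE Ht.
  case: (subst_neutral Hsig Hns) => Hsub; last exact/keeps_spine/spine_app.
  case: Hx => Hx.
  + by apply: keeps_fun => //; apply: IHs Hx.
  + by apply: keeps_arg => //; apply: IHa Hx.
- exact/keeps_lam/(IHb Ht d.+1 _ x.+1 (lams_var_subst_up Hsig)).
Qed.

Lemma closed_of_red_closed t v sigma : normal t -> lams_var_subst 0 sigma ->
  red (subst sigma t) v -> closed_term v -> closed_term t.
Proof.
move=> Ht Hsig Hred Hv x Hx.
have Hkeep := keeps_free_subst Ht Hsig (leq0n x) Hx.
have [n _ Hn] := keeps_free_free (keeps_free_red Hred Hkeep).
exact: Hv Hn.
Qed.

Theorem lemma2p1p4 (t v : term) (alpha : nat) (xs ns : seq nat) :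
  size ns = size xs ->
  normal t -> closed_term v ->
  red (subst (sub_sigma alpha xs ns) t) v ->
  forall i, i < size xs -> ~ free (nth 0 xs i) t.
Proof.
move=> _ Ht Hv Hred i _.
exact: closed_of_red_closed Ht (sub_sigma_lams_var_subst alpha xs ns) Hred Hv _.
Qed.
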